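(* Let $M_C$ be a mixed cycle of order $n$ and let $\eta(M_C)$ be the nullity of $N(M_C)$. Then $\eta(M_C)=0$ if $n$ is odd; if $n\equiv 2\pmod 4$, then $\eta(M_C)=2$ when $M_C$ is negative and $\eta(M_C)=0$ when $M_C$ is positive, semi-positive or semi-negative; if $n\equiv 0\pmod 4$, then $\eta(M_C)=2$ when $M_C$ is positive and $\eta(M_C)=0$ when $M_C$ is negative, semi-positive or semi-negative.
   Context: A mixed graph is obtained from a finite simple graph by orienting the edges of some subset of its edges. With $\omega=\frac{1+\mathbf{i}\sqrt3}{2}$, the matrix $N=(n_{st})$ has entry $\omega$ for an arc from $u_s$ to $u_t$, $\bar\omega$ for an arc from $u_t$ to $u_s$, $1$ for an undirected edge, $0$ otherwise. A mixed cycle is a mixed graph whose underlying graph is a cycle $v_1v_2\cdots v_nv_1$ ($n\ge3$); its weight is $n_{12}n_{23}\cdots n_{n1}$, a sixth root of unity. It is positive if the weight is $1$, negative if $-1$, semi-positive if the weight is $\omega$ or $\bar\omega$, semi-negative if it is $-\omega$ or $-\bar\omega$. *)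

From HB Require Import structures.
From mathcomp Require Import all_boot all_order all_algebra all_field.
Set Implicit Arguments. Unset Strict Implicit. Unset Printing Implicit Defensive.
Import Order.TTheory GRing.Theory Num.Theory.
Local Open Scope ring_scope.

(* A mixed cycle of order n: vertices u_0,...,u_{n-1} ('I_n), edges
   {u_i, u_{i+1 mod n}}; each edge is undirected, or an arc u_i -> u_{i+1}
   (Forward), or an arc u_{i+1} -> u_i (Backward). *)
Inductive orient := Undirected | Forward | Backward.

Definition omega : algC := (1 + 'i * sqrtC 3) / 2.

Definition edge_wt (e : orient) : algC :=
  match e with
  | Undirected => 1
  | Forward => omega
  | Backward => omega^*
  end.

Definition mixedN (n : nat) (o : 'I_n -> orient) : 'M[algC]_n :=
  \matrix_(s, t)
    (if t == ordS s then edge_wt (o s)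
     else if s == ordS t then (edge_wt (o t))^*
     else 0).

Definition cycle_weight (n : nat) (o : 'I_n -> orient) : algC :=
  \prod_(i < n) edge_wt (o i).

Definition positive_cycle n (o : 'I_n -> orient) := cycle_weight o = 1.
Definition negative_cycle n (o : 'I_n -> orient) := cycle_weight o = -1.
Definition semipositive_cycle n (o : 'I_n -> orient) :=
  cycle_weight o = omega \/ cycle_weight o = omega^*.
Definition seminegative_cycle n (o : 'I_n -> orient) :=
  cycle_weight o = - omega \/ cycle_weight o = - omega^*.

Definition nullity n (A : 'M[algC]_n) : nat := (n - \rank A)%N.

(* A left kernel vector u of the weighted cycle matrix satisfies, at column t,
   u_(t-1) w_(t-1) + u_(t+1) w_t^* = 0, i.e. (as |w_t| = 1) the recurrence
   u_(t+1) = - w_(t-1) w_t u_(t-1).  So u is determined by (u_0, u_1), and every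
   pair extends to a kernel vector iff the recurrence closes up around the cycle.
   Going once around a cycle of length 2m multiplies u by (-1)^m W, where W is
   the cycle weight, and going twice around an odd cycle multiplies it by -W^2.
   Hence the nullity is 2 if n = 2m and (-1)^m W = 1, and 0 otherwise; for odd n
   note that W^2 <> -1 because W^6 = 1. *)
From mathcomp Require Import all_boot all_order all_algebra all_field.
From mathcomp Require Import ring zify.
Set Implicit Arguments. Unset Strict Implicit. Unset Printing Implicit Defensive.
Import Order.TTheory GRing.Theory Num.Theory.
Local Open Scope ring_scope.

Definition periodic T (f : nat -> T) (N : nat) := forall k, f (k + N)%N = f k.

Lemma periodic_mod T (f : nat -> T) N : periodic f N -> forall k, f (k %% N)%N = f k.
Proof.
move=> fN k; rewrite {2}(divn_eq k N); elim: (k %/ N)%N => [|q IHq].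
  by rewrite mul0n add0n.
by rewrite mulSn -addnA addnC fN.
Qed.

Lemma prod_periodic_shift (R : comRingType) (g : nat -> R) N : periodic g N ->
  forall k, \prod_(j < N) g (k + j)%N = \prod_(j < N) g j.
Proof.
case: N => [_ k|N gN]; first by rewrite !big_ord0.
elim=> [|k IHk]; first by apply: eq_bigr => j _; rewrite add0n.
rewrite -IHk big_ord_recr big_ord_recl /= mulrC; congr (_ * _).
  by rewrite addn0 addSnnS gN.
by apply: eq_bigr => j _; rewrite /bump /= add1n addSnnS.
Qed.

Section SecondOrderRecurrence.
Variables (R : comRingType) (g : nat -> R).

Definition rec_sol (f : nat -> R) := forall k, f k.+2 = - (g k * g k.+1) * f k.

Fixpoint rec_seq (a b : R) (k : nat) : R :=
  match k with
  | 0 => a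
  | 1 => b
  | k'.+2 => - (g k' * g k'.+1) * rec_seq a b k'
  end.

Lemma rec_sol_iter f : rec_sol f ->
  forall m k, f (k + m.*2)%N = (-1) ^+ m * \prod_(j < m.*2) g (k + j)%N * f k.
Proof.
move=> fP; elim=> [|m IHm] k; first by rewrite addn0 big_ord0 expr0 !mul1r.
rewrite doubleS addnS addnS fP IHm !big_ord_recr /= exprS -addnS; ring.
Qed.

End SecondOrderRecurrence.

Lemma mxrank_eq_coords (F : fieldType) m n d (K : 'M[F]_(m, n)) (Q : 'M_(n, d))
    (V : 'M_(d, n)) :
  (forall u : 'rV_n, (u <= K)%MS -> u *m Q = 0 -> u = 0) ->
  (V <= K)%MS -> V *m Q = 1%:M -> \rank K = d.
Proof.
move=> Q_inj sVK VQ1; apply/eqP; rewrite eqn_leq; apply/andP; split.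
  rewrite -(mxrank_mul_ker K Q).
  have -> : \rank (K :&: kermx Q)%MS = 0%N.
    apply/eqP; rewrite mxrank_eq0 -submx0; apply/row_subP => i.
    have /[!sub_capmx] /andP[sK /sub_kermxP uQ] := row_sub i (K :&: kermx Q)%MS.
    by rewrite (Q_inj _ sK uQ) sub0mx.
  by rewrite addn0 rank_leq_col.
by rewrite -[d](mxrank1 F) -VQ1 (leq_trans (mxrankM_maxl _ _)) ?mxrankS.
Qed.

Section UnimodularCycle.
Variables (C : numClosedFieldType) (n : nat) (w : 'I_n -> C).
Hypothesis n_gt2 : (2 < n)%N.
Hypothesis w_unimodular : forall i, (w i)^* * w i = 1.

Definition cycle_mx : 'M[C]_n :=
  \matrix_(s, t) (if t == ordS s then w s else if s == ordS t then (w t)^* else 0).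

Let n_gt0 : (0 < n)%N. Proof. by apply: leq_trans n_gt2. Qed.

(* Kernel vectors are handled as n-periodic sequences on nat: [ix k] is the
   vertex k mod n. *)
Definition ix (k : nat) : 'I_n := Ordinal (ltn_pmod k n_gt0).

Let wt k := w (ix k).

Lemma ix_addn k : ix (k + n) = ix k.
Proof. by apply: val_inj; rewrite /= modnDr. Qed.

Lemma ix_ord (i : 'I_n) : ix i = i.
Proof. by apply: val_inj; rewrite /= modn_small. Qed.

Lemma ordS_ix k : ordS (ix k) = ix k.+1.
Proof. by apply: val_inj; rewrite /= -addn1 modnDml addn1. Qed.

Lemma ordS2_neq (t : 'I_n) : ordS (ordS t) != t.
Proof.
case: t => t lt_tn; apply/eqP => /(congr1 val) /=.
rewrite -addn1 modnDml addn1; have [lt_t2n|le_nt2] := ltnP t.+2 n.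
  by rewrite modn_small //; lia.
have -> : t.+2 = ((t.+2 - n) + n)%N by lia.
by rewrite modnDr modn_small; lia.
Qed.

Lemma cycle_mx_col (u : 'rV_n) k :
  (u *m cycle_mx) 0 (ix k.+1) = u 0 (ix k) * wt k + u 0 (ix k.+2) * (wt k.+1)^*.
Proof.
have ix2_neq j : ix j.+2 != ix j by rewrite -!ordS_ix ordS2_neq.
rewrite mxE (bigD1 (ix k)) // (bigD1 (ix k.+2)) //= big1 ?addr0 => [|s /andP[s_k s_k2]].
  by rewrite !mxE !ordS_ix !eqxx eq_sym (negbTE (ix2_neq _)).
rewrite mxE -[ix k.+1]ordS_ix (inj_eq (can_inj (@ordSK n))) eq_sym (negbTE s_k).
by rewrite !ordS_ix (negbTE s_k2) mulr0.
Qed.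

Lemma cycle_mx_kerP (u : 'rV_n) :
  u *m cycle_mx = 0 <-> rec_sol wt (fun k => u 0 (ix k)).
Proof.
have colP k : (u *m cycle_mx) 0 (ix k.+1) = 0 <->
              u 0 (ix k.+2) = - (wt k * wt k.+1) * u 0 (ix k).
  have wk1 := w_unimodular (ix k.+1); rewrite cycle_mx_col /wt; split=> [/eqP|->].
    by rewrite addrC addr_eq0 => /eqP uk2; rewrite -[LHS]mulr1 -wk1 mulrA uk2; ring.
  transitivity (u 0 (ix k) * w (ix k) * (1 - (w (ix k.+1))^* * w (ix k.+1))).
    by ring.
  by rewrite wk1 subrr mulr0.
split=> [uA0 k | urec]; first by apply/colP; rewrite uA0 mxE.
apply/rowP => t; rewrite [RHS]mxE -[t]ord_predK -[ord_pred t]ix_ord ordS_ix.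
exact/colP.
Qed.

Lemma prod_wt_shift k : \prod_(j < n) wt (k + j)%N = \prod_(i < n) w i.
Proof.
rewrite (@prod_periodic_shift _ wt) => [|j]; last by rewrite /wt ix_addn.
by apply: eq_bigr => j _; rewrite /wt ix_ord.
Qed.

Lemma rec_sol_shift_even m f : n = m.*2 -> rec_sol wt f ->
  forall k, f (k + n)%N = (-1) ^+ m * \prod_(i < n) w i * f k.
Proof. by move=> nE fP k; rewrite {1}nE (rec_sol_iter fP) -nE prod_wt_shift. Qed.

Lemma rec_sol_shift_odd f : rec_sol wt f ->
  forall k, f (k + n.*2)%N = (-1) ^+ n * (\prod_(i < n) w i) ^+ 2 * f k.
Proof.
move=> fP k; rewrite (rec_sol_iter fP) -addnn big_split_ord /= prod_wt_shift.
by under eq_bigr do rewrite addnA; rewrite prod_wt_shift expr2.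
Qed.

Lemma rank_ker_cycle_mx_eq0 N c : (n %| N)%N -> c != 1 ->
  (forall f, rec_sol wt f -> forall k, f (k + N)%N = c * f k) ->
  \rank (kermx cycle_mx) = 0%N.
Proof.
case/dvdnP=> q ->{N} c_neq1 monodromy.
apply/eqP; rewrite mxrank_eq0 kermx_eq0; apply: inj_row_free => u /cycle_mx_kerP uP.
apply/rowP => i; rewrite mxE -[i]ix_ord; apply/eqP; apply: contraR c_neq1 => ui0.
apply/eqP/(mulIf ui0); rewrite mul1r -(monodromy (fun k => u 0 (ix k))) //.
by congr (u 0 _); apply: val_inj; rewrite /= addnC modnMDl.
Qed.

Lemma cycle_mx_ker_init_eq0 (u : 'rV_n) : u *m cycle_mx = 0 ->
  u 0 (ix 0) = 0 -> u 0 (ix 1) = 0 -> u = 0.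
Proof.
move=> /cycle_mx_kerP uP u0 u1.
have uk0 k : u 0 (ix k) = 0 /\ u 0 (ix k.+1) = 0.
  by elim: k => [|k [IHk IHk1]] //; rewrite uP IHk mulr0.
by apply/rowP => i; rewrite mxE -[i]ix_ord; case: (uk0 i).
Qed.

Lemma rank_ker_cycle_mx_eq2 :
  (forall f, rec_sol wt f -> periodic f n) -> \rank (kermx cycle_mx) = 2%N.
Proof.
move=> monodromy1.
pose Q : 'M[C]_(n, 2) := \matrix_(i, j) (i == ix j)%:R.
pose V : 'M[C]_(2, n) := \matrix_(r, i) rec_seq wt (r == 0 :> nat)%:R (r == 1 :> nat)%:R i.
(* Q reads off (u_0, u_1); the rows of V solve the recurrence with initial
   values (1, 0) and (0, 1). *)
have mulQ m (X : 'M_(m, n)) r j : (X *m Q) r j = X r (ix j).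
  rewrite mxE (bigD1 (ix j)) //= big1 ?addr0 => [|i /negbTE i_j].
    by rewrite mxE eqxx mulr1.
  by rewrite mxE i_j mulr0.
apply: (mxrank_eq_coords (Q := Q) (V := V)).
- move=> u /sub_kermxP uA0 uQ0; apply: cycle_mx_ker_init_eq0 => //.
    by rewrite -(mulQ _ _ _ ord0) uQ0 mxE.
  by rewrite -(mulQ _ _ _ 1) uQ0 mxE.
- apply/sub_kermxP/row_matrixP => r; rewrite row_mul row0; apply/cycle_mx_kerP => k.
  by rewrite !mxE !(periodic_mod (monodromy1 (rec_seq wt _ _) (fun=> erefl))).
- apply/matrixP => r j; rewrite mulQ !mxE /= modn_small; last first.
    by rewrite (leq_trans (ltn_ord j)) // ltnW.
  by case: r j => [[|[]]] // ? [[|[]]].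
Qed.

Lemma rank_ker_cycle_mx_even m : n = m.*2 ->
  \rank (kermx cycle_mx) = if (-1) ^+ m * \prod_(i < n) w i == 1 then 2%N else 0%N.
Proof.
move=> nE; case: ifP => [/eqP c1 | /negbT c_neq1].
  by apply: rank_ker_cycle_mx_eq2 => f fP k; rewrite (rec_sol_shift_even nE fP) c1 mul1r.
by apply: (rank_ker_cycle_mx_eq0 (dvdnn n) c_neq1) => f; apply: rec_sol_shift_even.
Qed.

Lemma rank_ker_cycle_mx_odd : odd n -> (\prod_(i < n) w i) ^+ 2 != -1 ->
  \rank (kermx cycle_mx) = 0%N.
Proof.
move=> n_odd W2_neqN1; apply: (@rank_ker_cycle_mx_eq0 n.*2 (- (\prod_(i < n) w i) ^+ 2)).
- by rewrite -muln2 dvdn_mulr.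
- by rewrite eqr_oppLR.
- by move=> f fP k; rewrite (rec_sol_shift_odd fP) -signr_odd n_odd mulN1r.
Qed.

End UnimodularCycle.

Lemma conj_omega : omega^* = 1 - omega.
Proof.
have sqrt3_real : (sqrtC 3)^* = sqrtC 3 :> algC.
  by apply: geC0_conj; rewrite sqrtC_ge0 ler0n.
rewrite /omega !(rmorphM, rmorphD, rmorph1, fmorphV, rmorph_nat) /= conjCi sqrt3_real.
by field.
Qed.

Lemma omega_sqr : omega ^+ 2 = omega - 1.
Proof.
have -> : omega ^+ 2 = (1 + 2 * 'i * sqrtC 3 + ('i * sqrtC 3) ^+ 2) / 4.
  by rewrite /omega; field.
by rewrite exprMn sqrCi sqrtCK /omega; field.
Qed.

Lemma omega_unimodular : omega^* * omega = 1.
Proof. by rewrite conj_omega mulrBl mul1r -expr2 omega_sqr; ring. Qed.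

Lemma edge_wt_unimodular e : (edge_wt e)^* * edge_wt e = 1.
Proof.
case: e => /=; first by rewrite conjC1 mulr1.
  exact: omega_unimodular.
by rewrite conjCK mulrC omega_unimodular.
Qed.

Lemma omega_expr6 : omega ^+ 6 = 1.
Proof.
have omega3 : omega ^+ 3 = -1.
  by rewrite exprS omega_sqr mulrBr mulr1 -expr2 omega_sqr; ring.
by rewrite (exprM omega 3 2) omega3 sqrrN expr1n.
Qed.

Lemma omega_sqr_neq1 : omega ^+ 2 != 1.
Proof.
apply/eqP => omega2; have := omega_sqr; rewrite omega2 => /eqP.
rewrite eq_sym subr_eq => /eqP omegaE; have := omega_expr6.
rewrite omegaE => /eqP; rewrite -subr_eq0 (_ : _ - _ = 63%:R) ?pnatr_eq0 //; ring.
Qed.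

Lemma cycle_weight_expr6 n (o : 'I_n -> orient) : cycle_weight o ^+ 6 = 1.
Proof.
rewrite /cycle_weight -prodrXl big1 // => i _.
case: (o i) => /=; [exact: expr1n | exact: omega_expr6 |].
by rewrite -rmorphXn omega_expr6 rmorph1.
Qed.

Lemma sqr_neqN1_expr6 (R : numDomainType) (x : R) : x ^+ 6 = 1 -> x ^+ 2 != -1.
Proof.
move=> x6; apply/eqP => x2; move: x6.
by rewrite (exprM x 2 3) x2 -signr_odd expr1 => /eqP; rewrite eqNr oner_eq0.
Qed.

Section CycleWeight.
Variables (n : nat) (o : 'I_n -> orient).

Lemma semi_cycle_weight_sqr_neq1 :
  semipositive_cycle o \/ seminegative_cycle o -> cycle_weight o ^+ 2 != 1.
Proof.
have conj_omega_sqr_neq1 : omega^* ^+ 2 != 1.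
  by rewrite -rmorphXn -(inj_eq (can_inj conjCK)) conjCK rmorph1 omega_sqr_neq1.
by case=> [[]|[]] ->; rewrite ?sqrrN ?omega_sqr_neq1.
Qed.

Lemma cycle_weight_neq1 :
  negative_cycle o \/ semipositive_cycle o \/ seminegative_cycle o ->
  cycle_weight o != 1.
Proof.
case=> [-> | /semi_cycle_weight_sqr_neq1]; first by rewrite eqNr oner_eq0.
by apply: contra => /eqP ->; rewrite expr1n.
Qed.

Lemma cycle_weight_neqN1 :
  positive_cycle o \/ semipositive_cycle o \/ seminegative_cycle o ->
  cycle_weight o != -1.
Proof.
case=> [-> | /semi_cycle_weight_sqr_neq1]; first by rewrite eq_sym eqNr oner_eq0.
by apply: contra => /eqP ->; rewrite sqrrN expr1n.
Qed.

End CycleWeight.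

Theorem lemma5p4 (n : nat) (hn : (3 <= n)%N) (o : 'I_n -> orient) :
  (odd n -> nullity (mixedN o) = 0%N) /\
  ((n %% 4 = 2)%N ->
     (negative_cycle o -> nullity (mixedN o) = 2%N) /\
     (positive_cycle o \/ semipositive_cycle o \/ seminegative_cycle o ->
        nullity (mixedN o) = 0%N)) /\
  ((n %% 4 = 0)%N ->
     (positive_cycle o -> nullity (mixedN o) = 2%N) /\
     (negative_cycle o \/ semipositive_cycle o \/ seminegative_cycle o ->
        nullity (mixedN o) = 0%N)).
Proof.
have unimodular i := edge_wt_unimodular (o i).
rewrite /nullity -mxrank_ker (_ : mixedN o = cycle_mx (fun i => edge_wt (o i))) //.
split; [|split] => nP.
- exact: rank_ker_cycle_mx_odd hn unimodular nP (sqr_neqN1_expr6 (cycle_weight_expr6 o)).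
- have nE : n = ((n %/ 4).*2.+1).*2 by lia.
  rewrite (rank_ker_cycle_mx_even hn unimodular nE) -signr_odd /= odd_double expr1.
  rewrite mulN1r eqr_oppLR -/(cycle_weight o).
  by split=> [-> | /cycle_weight_neqN1 /negbTE ->]; rewrite ?eqxx.
- have nE : n = ((n %/ 4).*2).*2 by lia.
  rewrite (rank_ker_cycle_mx_even hn unimodular nE) -signr_odd odd_double expr0.
  rewrite mul1r -/(cycle_weight o).
  by split=> [-> | /cycle_weight_neq1 /negbTE ->]; rewrite ?eqxx.
Qed.
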